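(* Fix $\delta>0$. As $T\to\infty$ along $2\mathbb N$, $$Q^1_T(\phi(\delta,T))=\sqrt{1-e^{-2\phi(\delta,\infty)}}\;e^{-c_\delta T}\,(1+o(1)),$$ where $c_\delta:=\phi(\delta,\infty)+\log\big(1+\sqrt{1-e^{-2\phi(\delta,\infty)}}\big)=\frac\delta2+\log\sqrt{2-e^{-\delta}}$.
   Context: $(S_n)$ is the simple symmetric random walk on $\mathbb Z$ started at $0$ with law $\mathbf P$. For $T\in2\mathbb N\cup\{\infty\}$ (convention $\infty\mathbb Z=\{0\}$), $\tau_1^T:=\inf\{n>0:S_n\in T\mathbb Z\}$, $\varepsilon^T_1:=S_{\tau^T_1}/T$, $Q^1_T(\lambda):=\mathbf E[e^{-\lambda\tau^T_1}\mathbf 1_{\{\varepsilon^T_1=1\}}]$ and $Q_T(\lambda):=\mathbf E[e^{-\lambda\tau^T_1}]$. For $\delta>0$, $\phi(\delta,T)$ denotes the unique real solution $\lambda$ of $Q_T(\lambda)=e^{-\delta}$; in particular $\phi(\delta,\infty)=\frac\delta2-\log\sqrt{2-e^{-\delta}}>0$. *)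

From Stdlib Require Import Reals ZArith List Bool Arith.
Import ListNotations.
Open Scope R_scope.

(* A path of the simple symmetric random walk with n steps is a list of n
   booleans (true = +1, false = -1); under P all 2^n such lists are equally
   likely.  Events depending on the first n steps have probability
   (number of step lists of length n in the event) / 2^n. *)

Fixpoint allseq (n : nat) : list (list bool) :=
  match n with
  | O => [nil]
  | S m => flat_map (fun s => [true :: s; false :: s]) (allseq m)
  end.

Definition step (b : bool) : Z := if b then 1%Z else (-1)%Z.

Fixpoint pos (s : list bool) (k : nat) : Z :=
  match k, s with
  | O, _ => 0%Z
  | S k', b :: s' => (step b + pos s' k')%Z
  | S _, nil => 0%Z
  end.

Definition inTZb (T : nat) (x : Z) : bool := Z.eqb (Z.modulo x (Z.of_nat T)) 0.

Definition firsthitb (T : nat) (s : list bool) (n : nat) : bool :=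
  (0 <? n)%nat && inTZb T (pos s n)
  && forallb (fun k => negb (inTZb T (pos s k))) (seq 1 (n - 1)).

Definition P_tau (T n : nat) : R :=
  INR (length (filter (fun s => firsthitb T s n) (allseq n))) / 2 ^ n.

(* P(tau^T_1 = n, eps^T_1 = 1), i.e. S_tau = T *)
Definition P_tau_eps1 (T n : nat) : R :=
  INR (length (filter (fun s => firsthitb T s n && Z.eqb (pos s n) (Z.of_nat T))
                      (allseq n))) / 2 ^ n.

(* Q_T(lam) = sum_n P(tau = n) e^{-lam n} ;  Q^1_T(lam) analogously *)
Definition Q_terms (T : nat) (lam : R) (n : nat) : R := P_tau T n * exp (- lam * INR n).
Definition Q1_terms (T : nat) (lam : R) (n : nat) : R := P_tau_eps1 T n * exp (- lam * INR n).

(* phi(delta, infinity), given in closed form in the paper's context *)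
Definition phi_inf (delta : R) : R := delta / 2 - ln (sqrt (2 - exp (- delta))).

Definition c_delta (delta : R) : R :=
  phi_inf delta + ln (1 + sqrt (1 - exp (- 2 * phi_inf delta))).

(* Write s = e^-lam.  Decomposing at the first step, the generating functions
   of the exit law of the walk stopped on T Z are s-harmonic along the rays
   k |-> +-k, 0 < k < T; solving this linear recurrence with its boundary
   values gives, with s = 2z/(1+z^2),
     Q_T(lam)   = 2z^2/(1+z^2) + 2z^T (1-z^2) / ((1+z^2)(1+z^T)),
     Q^1_T(lam) = z^T (1-z^2) / ((1+z^2)(1-z^2T)),
   as soon as Q_T(lam) < 1 (which forces s < 1: at s = 1 the value is 1).
   With Y = e^-2c_delta one has e^-delta = 2Y/(1+Y), so Q_T(phi) = e^-delta
   puts Z = z^2 within 2Y^(T/2) below Y, and the normalised ratio of the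
   theorem becomes an explicit expression in Z tending to 1.
   The file proceeds in that order: path counting, series, the harmonic
   recurrence, the closed forms, the limit, and finally the theorem. *)

From Pilot Require Import Defs.
From Stdlib Require Import Reals ZArith List Bool Arith Lia Lra.
From Coquelicot Require Import Coquelicot.
Import ListNotations.
Open Scope R_scope.

Definition hitsb (T : nat) (x : Z) (s : list bool) (n : nat) : bool :=
  (0 <? n)%nat && inTZb T (x + Defs.pos s n)
  && forallb (fun k => negb (inTZb T (x + Defs.pos s k))) (seq 1 (n - 1)).

Lemma pos_0 (s : list bool) : Defs.pos s 0 = 0%Z.
Proof. now destruct s. Qed.

Lemma forallb_seq_shift (f : nat -> bool) (a m : nat) :
  forallb f (seq (S a) m) = forallb (fun k => f (S k)) (seq a m).
Proof. revert a; induction m as [|m IH]; intro a; simpl; [|rewrite IH]; reflexivity. Qed.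

Lemma hitsb_cons (T : nat) (x : Z) (b : bool) (s : list bool) (n : nat) :
  hitsb T x (b :: s) (S n) =
  if (n =? 0)%nat then inTZb T (x + step b)
  else negb (inTZb T (x + step b)) && hitsb T (x + step b) s n.
Proof.
  unfold hitsb. destruct n as [|m]; simpl.
  - now rewrite pos_0, Z.add_0_r, andb_true_r.
  - rewrite Nat.sub_0_r, forallb_seq_shift; simpl.
    rewrite pos_0, Z.add_0_r, !Z.add_assoc.
    destruct (inTZb T (x + step b)); simpl; [now rewrite !andb_false_r|].
    f_equal. induction (seq 1 m) as [|k l IH]; simpl; [reflexivity|].
    now rewrite Z.add_assoc, IH.
Qed.

Definition hit_count (T : nat) (tgt : Z -> bool) (x : Z) (n : nat) : nat :=
  length (filter (fun s => hitsb T x s n && tgt (x + Defs.pos s n)%Z) (allseq n)).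

(* The same count for the walk stopped on T Z: a walk started on T Z is
   absorbed at time 0. *)
Definition exit_count (T : nat) (tgt : Z -> bool) (y : Z) (n : nat) : nat :=
  if inTZb T y then (if (n =? 0)%nat && tgt y then 1 else 0)%nat
  else hit_count T tgt y n.

Lemma length_filter_flat_map (P : list bool -> bool) (l : list (list bool)) :
  length (filter P (flat_map (fun s => [true :: s; false :: s]) l)) =
  (length (filter (fun s => P (true :: s)) l)
   + length (filter (fun s => P (false :: s)) l))%nat.
Proof.
  induction l as [|a l IH]; simpl; [reflexivity|].
  destruct (P (true :: a)), (P (false :: a)); simpl; rewrite IH; lia.
Qed.

Lemma hit_count_first_step (T : nat) (tgt : Z -> bool) (x : Z) (n : nat) (b : bool) :
  length (filter (fun s => hitsb T x (b :: s) (S n) && tgt (x + Defs.pos (b :: s) (S n))%Z)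
                 (allseq n))
  = exit_count T tgt (x + step b) n.
Proof.
  unfold exit_count, hit_count.
  assert (E : forall s, hitsb T x (b :: s) (S n) && tgt (x + Defs.pos (b :: s) (S n))%Z =
    if (n =? 0)%nat then inTZb T (x + step b) && tgt (x + step b)%Z
    else negb (inTZb T (x + step b))
         && (hitsb T (x + step b) s n && tgt (x + step b + Defs.pos s n)%Z)).
  { intro s. rewrite hitsb_cons. cbn [Defs.pos]. rewrite Z.add_assoc.
    destruct n; simpl; [rewrite pos_0, Z.add_0_r|]; now destruct (inTZb _ _). }
  rewrite (filter_ext _ _ E).
  destruct n as [|n]; simpl.
  - now destruct (inTZb T (x + step b)%Z), (tgt (x + step b)%Z).
  - destruct (inTZb T (x + step b)%Z); simpl; [|reflexivity].
    match goal with |- length (filter _ ?l) = _ => induction l; simpl; auto end.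
Qed.

Lemma hit_count_S (T : nat) (tgt : Z -> bool) (x : Z) (n : nat) :
  hit_count T tgt x (S n) = (exit_count T tgt (x + 1) n + exit_count T tgt (x - 1) n)%nat.
Proof.
  unfold hit_count at 1. cbn [allseq]. rewrite length_filter_flat_map.
  now rewrite !hit_count_first_step.
Qed.

Definition hit_prob (T : nat) (tgt : Z -> bool) (x : Z) (n : nat) : R :=
  INR (hit_count T tgt x n) / 2 ^ n.

Definition exit_prob (T : nat) (tgt : Z -> bool) (y : Z) (n : nat) : R :=
  INR (exit_count T tgt y n) / 2 ^ n.

Definition ind (b : bool) : R := if b then 1 else 0.

Lemma P_tau_hit_prob (T n : nat) : P_tau T n = hit_prob T (fun _ => true) 0 n.
Proof.
  unfold P_tau, hit_prob, hit_count. do 3 f_equal.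
  apply filter_ext. intro s. now rewrite andb_true_r.
Qed.

Lemma P_tau_eps1_hit_prob (T n : nat) :
  P_tau_eps1 T n = hit_prob T (fun y => Z.eqb y (Z.of_nat T)) 0 n.
Proof. reflexivity. Qed.

Lemma hit_prob_0 (T : nat) (tgt : Z -> bool) (x : Z) : hit_prob T tgt x 0 = 0.
Proof. unfold hit_prob. simpl. lra. Qed.

Lemma hit_prob_S (T : nat) (tgt : Z -> bool) (x : Z) (n : nat) :
  hit_prob T tgt x (S n) = / 2 * (exit_prob T tgt (x + 1) n + exit_prob T tgt (x - 1) n).
Proof.
  unfold hit_prob, exit_prob. rewrite hit_count_S, plus_INR. simpl (2 ^ S n).
  assert (0 < 2 ^ n) by (apply pow_lt; lra). field. lra.
Qed.

Lemma exit_prob_outside (T : nat) (tgt : Z -> bool) (y : Z) (n : nat) :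
  inTZb T y = false -> exit_prob T tgt y n = hit_prob T tgt y n.
Proof. intro H. unfold exit_prob, hit_prob, exit_count. now rewrite H. Qed.

Lemma exit_prob_on (T : nat) (tgt : Z -> bool) (y : Z) (n : nat) :
  inTZb T y = true -> exit_prob T tgt y n = if (n =? 0)%nat then ind (tgt y) else 0.
Proof.
  intro H. unfold exit_prob, exit_count, ind. rewrite H.
  destruct n; simpl; [destruct (tgt y)|]; simpl; lra.
Qed.

Lemma hit_prob_nonneg (T : nat) (tgt : Z -> bool) (x : Z) (n : nat) : 0 <= hit_prob T tgt x n.
Proof.
  unfold hit_prob. apply Rle_mult_inv_pos; [apply pos_INR | apply pow_lt; lra].
Qed.

Lemma exit_prob_nonneg (T : nat) (tgt : Z -> bool) (y : Z) (n : nat) : 0 <= exit_prob T tgt y n.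
Proof.
  unfold exit_prob. apply Rle_mult_inv_pos; [apply pos_INR | apply pow_lt; lra].
Qed.

(* A Stdlib infinite sum is the limit of the partial sums, which gives access
   to Coquelicot's algebra of limits. *)
Lemma infinite_sum_lim (f : nat -> R) (l : R) :
  infinite_sum f l <-> is_lim_seq (sum_f_R0 f) l.
Proof. symmetry. apply is_lim_seq_Reals. Qed.

Lemma isum_ext (f g : nat -> R) (l : R) :
  (forall n, f n = g n) -> infinite_sum f l -> infinite_sum g l.
Proof.
  intros E H. apply infinite_sum_lim. apply infinite_sum_lim in H.
  apply (is_lim_seq_ext _ _ _ (fun N => sum_eq f g N (fun n _ => E n)) H).
Qed.

Lemma isum_plus (f g : nat -> R) (a b : R) :
  infinite_sum f a -> infinite_sum g b -> infinite_sum (fun n => f n + g n) (a + b).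
Proof.
  intros Hf%infinite_sum_lim Hg%infinite_sum_lim. apply infinite_sum_lim.
  apply (is_lim_seq_ext (fun N => sum_f_R0 f N + sum_f_R0 g N)).
  - intro N. symmetry. apply sum_plus.
  - now apply is_lim_seq_plus'.
Qed.

Lemma isum_scal (c : R) (f : nat -> R) (a : R) :
  infinite_sum f a -> infinite_sum (fun n => c * f n) (c * a).
Proof.
  intros Hf%infinite_sum_lim. apply infinite_sum_lim.
  apply (is_lim_seq_ext (fun N => c * sum_f_R0 f N)).
  - intro N. rewrite scal_sum. apply sum_eq. intros n _. ring.
  - apply is_lim_seq_mult'; [apply is_lim_seq_const | exact Hf].
Qed.

Lemma isum_shift (f : nat -> R) (l : R) :
  infinite_sum f l -> infinite_sum (fun n => f (S n)) (l - f 0%nat).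
Proof.
  intros Hf%infinite_sum_lim. apply infinite_sum_lim.
  apply (is_lim_seq_ext (fun N => sum_f_R0 f (S N) - f 0%nat)).
  - intro N. rewrite (decomp_sum f (S N)) by lia. simpl pred. ring.
  - apply is_lim_seq_minus'; [now apply is_lim_seq_incr_1 in Hf | apply is_lim_seq_const].
Qed.

Lemma isum_const_term (c s : R) :
  infinite_sum (fun n => (if (n =? 0)%nat then c else 0) * s ^ n) c.
Proof.
  apply infinite_sum_lim. apply (is_lim_seq_ext (fun _ => c)); [|apply is_lim_seq_const].
  intro N. induction N as [|N IH]; simpl; [|rewrite <- IH]; ring.
Qed.

Lemma isum_le (f g : nat -> R) (a b : R) :
  (forall n, f n <= g n) -> infinite_sum f a -> infinite_sum g b -> a <= b.
Proof.
  intros H Hf Hg. exact (Rle_cv_lim (fun N => sum_Rle f g N (fun n _ => H n)) Hf Hg).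
Qed.

Lemma isum_comparison (f g : nat -> R) (b : R) :
  (forall n, 0 <= f n <= g n) -> infinite_sum g b -> exists a, infinite_sum f a.
Proof.
  intros H Hg. destruct (Rseries_CV_comp f g H (exist _ b Hg)) as [a Ha]. now exists a.
Qed.

Lemma nat_ind2 (P : nat -> Prop) :
  P 0%nat -> P 1%nat -> (forall k, P k -> P (S k) -> P (S (S k))) -> forall k, P k.
Proof.
  intros H0 H1 HS k. enough (P k /\ P (S k)) by tauto.
  induction k as [|k [IH1 IH2]]; auto.
Qed.

(* The solution of h(k+1) + h(k-1) = (2/s) h(k) with h(0) = a, h(1) = u:
   the values along a ray of a function that is s-harmonic for the walk. *)
Fixpoint harmonic_seq (s a u : R) (k : nat) : R :=
  match k with
  | O => a
  | S k' => match k' with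
            | O => u
            | S k'' => 2 / s * harmonic_seq s a u k' - harmonic_seq s a u k''
            end
  end.

Lemma harmonic_seq_SS (s a u : R) (k : nat) :
  harmonic_seq s a u (S (S k)) = 2 / s * harmonic_seq s a u (S k) - harmonic_seq s a u k.
Proof. reflexivity. Qed.

Lemma harmonic_seq_one (a u : R) (k : nat) : harmonic_seq 1 a u k = a + INR k * (u - a).
Proof.
  induction k as [| |k IH1 IH2] using nat_ind2; [simpl; ring | simpl; ring |].
  rewrite harmonic_seq_SS, IH1, IH2, !S_INR. field.
Qed.

(* For s = 2z/(1+z^2) the harmonic functions are combinations of z^k and
   z^-k; we record this in a form free of negative powers. *)
Lemma harmonic_seq_closed_form (s z a u : R) (k : nat) : 0 < z -> s = 2 * z / (1 + z ^ 2) ->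
  harmonic_seq s a u k * z ^ k * (1 - z ^ 2)
  = (u - z * a) * z * (1 - (z ^ k) ^ 2) + a * (z ^ k) ^ 2 * (1 - z ^ 2).
Proof.
  intros Hz Hs.
  induction k as [| |k IH1 IH2] using nat_ind2; [simpl; ring | simpl; ring |].
  rewrite harmonic_seq_SS.
  set (h0 := harmonic_seq s a u k) in *. set (h1 := harmonic_seq s a u (S k)) in *.
  replace (z ^ S k) with (z * z ^ k) in IH2 by (simpl; ring).
  replace (z ^ S (S k)) with (z ^ 2 * z ^ k) by (simpl; ring).
  set (X := z ^ k) in *.
  transitivity ((1 + z ^ 2) * (h1 * (z * X) * (1 - z ^ 2)) - z ^ 2 * (h0 * X * (1 - z ^ 2))).
  - rewrite Hs. field. split; nra.
  - rewrite IH1, IH2. ring.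
Qed.

Lemma isum_harmonic (F : nat -> nat -> R) (s a u : R) (T : nat) : 0 < s ->
  (forall k n, (1 <= k < T)%nat -> F k (S n) = / 2 * (F (k - 1)%nat n + F (S k) n)) ->
  (forall k, (1 <= k < T)%nat -> F k 0%nat = 0) ->
  infinite_sum (fun n => F 0%nat n * s ^ n) a ->
  infinite_sum (fun n => F 1%nat n * s ^ n) u ->
  forall k, (k <= T)%nat -> infinite_sum (fun n => F k n * s ^ n) (harmonic_seq s a u k).
Proof.
  intros Hs Hrec H0 Ha Hu.
  induction k as [| |k IH1 IH2] using nat_ind2; intro Hk; auto.
  rewrite harmonic_seq_SS.
  specialize (IH1 ltac:(lia)). specialize (IH2 ltac:(lia)).
  assert (Hsh := isum_shift _ _ IH2). cbv beta in Hsh.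
  rewrite (H0 (S k)), Rmult_0_l, Rminus_0_r in Hsh by lia.
  apply (isum_ext (fun n => 2 / s * (F (S k) (S n) * s ^ S n) + -1 * (F k n * s ^ n))).
  - intro n. rewrite (Hrec (S k)) by lia. replace (S k - 1)%nat with k by lia.
    simpl. field. lra.
  - replace (2 / s * harmonic_seq s a u (S k) - harmonic_seq s a u k)
      with (2 / s * harmonic_seq s a u (S k) + -1 * harmonic_seq s a u k) by ring.
    apply isum_plus; apply isum_scal; assumption.
Qed.

Lemma inTZb_iff (T : nat) (x : Z) : (0 < T)%nat -> inTZb T x = true <-> (Z.of_nat T | x)%Z.
Proof. intro HT. unfold inTZb. rewrite Z.eqb_eq. apply Z.mod_divide. lia. Qed.

Lemma inTZb_ray_interior (T : nat) (d : bool) (k : nat) :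
  (0 < k < T)%nat -> inTZb T (step d * Z.of_nat k) = false.
Proof.
  intro Hk. apply not_true_is_false. rewrite inTZb_iff by lia. intro Hdiv.
  assert (Hk' : (Z.of_nat T | Z.of_nat k)%Z).
  { replace (Z.of_nat k) with (step d * (step d * Z.of_nat k))%Z by (destruct d; unfold step; lia).
    now apply Z.divide_mul_r. }
  apply Z.divide_pos_le in Hk'; lia.
Qed.

Lemma inTZb_ray_end (T : nat) (d : bool) (k : nat) :
  (0 < T)%nat -> (k = 0 \/ k = T)%nat -> inTZb T (step d * Z.of_nat k) = true.
Proof.
  intros HT Hk. rewrite inTZb_iff by lia.
  apply Z.divide_mul_r. destruct Hk; subst; [apply Z.divide_0_r | apply Z.divide_refl].
Qed.

Lemma exit_prob_ray_step (T : nat) (tgt : Z -> bool) (d : bool) (k n : nat) :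
  (1 <= k < T)%nat ->
  exit_prob T tgt (step d * Z.of_nat k) (S n)
  = / 2 * (exit_prob T tgt (step d * Z.of_nat (k - 1)) n
           + exit_prob T tgt (step d * Z.of_nat (S k)) n).
Proof.
  intro Hk. rewrite exit_prob_outside, hit_prob_S by (apply inTZb_ray_interior; lia).
  rewrite Nat2Z.inj_succ, Nat2Z.inj_sub by lia. f_equal.
  set (y := (step d * Z.of_nat k)%Z).
  replace (step d * (Z.of_nat k - Z.of_nat 1))%Z with (y - step d)%Z by (unfold y; ring).
  replace (step d * Z.succ (Z.of_nat k))%Z with (y + step d)%Z by (unfold y; ring).
  destruct d; cbn [step]; [ring|].
  replace (y - -1)%Z with (y + 1)%Z by ring. replace (y + -1)%Z with (y - 1)%Z by ring. ring.
Qed.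

Lemma ray_boundary_value (T : nat) (tgt : Z -> bool) (d : bool) (s u : R) :
  (2 <= T)%nat -> 0 < s ->
  infinite_sum (fun n => exit_prob T tgt (step d) n * s ^ n) u ->
  harmonic_seq s (ind (tgt 0%Z)) u T = ind (tgt (step d * Z.of_nat T)%Z).
Proof.
  intros HT Hs Hu.
  set (F := fun k n => exit_prob T tgt (step d * Z.of_nat k) n).
  assert (Hend : forall k n, (k = 0 \/ k = T)%nat ->
    F k n = if (n =? 0)%nat then ind (tgt (step d * Z.of_nat k)%Z) else 0).
  { intros k n Hk. apply exit_prob_on, inTZb_ray_end; lia. }
  assert (HT' : infinite_sum (fun n => F T n * s ^ n) (harmonic_seq s (ind (tgt 0%Z)) u T)).
  { apply (isum_harmonic F s _ u T); [exact Hs | | | | | lia].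
    - intros k n Hk. now apply exit_prob_ray_step.
    - intros k Hk. unfold F. rewrite exit_prob_outside by (apply inTZb_ray_interior; lia).
      apply hit_prob_0.
    - apply (isum_ext (fun n => (if (n =? 0)%nat then ind (tgt 0%Z) else 0) * s ^ n)).
      + intro n. rewrite Hend by lia. now rewrite Z.mul_0_r.
      + apply isum_const_term.
    - refine (isum_ext _ _ _ _ Hu). intro n. unfold F. simpl Z.of_nat. now rewrite Z.mul_1_r. }
  apply (uniqueness_sum _ _ _ HT').
  apply (isum_ext (fun n => (if (n =? 0)%nat then ind (tgt (step d * Z.of_nat T)%Z) else 0) * s ^ n)).
  - intro n. now rewrite Hend by lia.
  - apply isum_const_term.
Qed.

Lemma first_step_gf (T : nat) (tgt : Z -> bool) (s G : R) : 0 < s ->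
  infinite_sum (fun n => hit_prob T tgt 0 n * s ^ n) G ->
  exists up um,
    infinite_sum (fun n => exit_prob T tgt (step true) n * s ^ n) up /\
    infinite_sum (fun n => exit_prob T tgt (step false) n * s ^ n) um /\
    G = s / 2 * (up + um).
Proof.
  intros Hs HG.
  assert (Hsplit : forall n, hit_prob T tgt 0 (S n) * s ^ S n
    = s / 2 * (exit_prob T tgt (step true) n * s ^ n + exit_prob T tgt (step false) n * s ^ n)).
  { intro n. rewrite hit_prob_S. simpl. field. }
  assert (Hshift := isum_shift _ _ HG). cbv beta in Hshift.
  rewrite hit_prob_0, Rmult_0_l, Rminus_0_r in Hshift.
  assert (Hdom := isum_scal (2 / s) _ _ Hshift). cbv beta in Hdom.
  assert (Hbound : forall d n, 0 <= exit_prob T tgt (step d) n * s ^ n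
                               <= 2 / s * (hit_prob T tgt 0 (S n) * s ^ S n)).
  { intros d n. rewrite Hsplit.
    assert (Hsn : 0 < s ^ n) by (apply pow_lt; lra).
    pose proof (exit_prob_nonneg T tgt (step true) n).
    pose proof (exit_prob_nonneg T tgt (step false) n).
    replace (2 / s * (s / 2 * (exit_prob T tgt (step true) n * s ^ n
                               + exit_prob T tgt (step false) n * s ^ n)))
      with (exit_prob T tgt (step true) n * s ^ n + exit_prob T tgt (step false) n * s ^ n)
      by (field; lra).
    destruct d; split; nra. }
  destruct (isum_comparison _ _ _ (Hbound true) Hdom) as [up Hup].
  destruct (isum_comparison _ _ _ (Hbound false) Hdom) as [um Hum].
  exists up, um. split; [exact Hup|]. split; [exact Hum|].
  apply (uniqueness_sum _ _ _ Hshift).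
  apply (isum_ext _ _ _ (fun n => eq_sym (Hsplit n))).
  apply isum_scal, isum_plus; assumption.
Qed.

Lemma return_gf_at_one (T : nat) (l : R) : (2 <= T)%nat ->
  infinite_sum (fun n => hit_prob T (fun _ => true) 0 n * 1 ^ n) l -> l = 1.
Proof.
  intros HT Hl.
  destruct (first_step_gf T _ 1 l Rlt_0_1 Hl) as (up & um & Hup & Hum & ->).
  assert (HTpos : 0 < INR T) by (apply lt_0_INR; lia).
  assert (Exit1 : forall d u, infinite_sum (fun n => exit_prob T (fun _ => true) (step d) n * 1 ^ n) u
                              -> u = 1).
  { intros d u Hu. pose proof (ray_boundary_value T _ d 1 u HT Rlt_0_1 Hu) as Hb.
    rewrite harmonic_seq_one in Hb. unfold ind in Hb.
    apply (Rmult_eq_reg_l (INR T)); nra. }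
  rewrite (Exit1 _ _ Hup), (Exit1 _ _ Hum). lra.
Qed.

Lemma return_gf_lt_one (T : nat) (s q : R) : (2 <= T)%nat -> 0 < s -> q < 1 ->
  infinite_sum (fun n => hit_prob T (fun _ => true) 0 n * s ^ n) q -> s < 1.
Proof.
  intros HT Hs Hq HQ. apply Rnot_le_lt. intro Hs1.
  assert (Hcmp : forall n, 0 <= hit_prob T (fun _ => true) 0 n * 1 ^ n
                           <= hit_prob T (fun _ => true) 0 n * s ^ n).
  { intro n. rewrite pow1. pose proof (hit_prob_nonneg T (fun _ => true) 0 n).
    assert (1 <= s ^ n) by now apply pow_R1_Rle. split; nra. }
  destruct (isum_comparison _ _ _ Hcmp HQ) as [l Hl].
  pose proof (isum_le _ _ _ _ (fun n => proj2 (Hcmp n)) Hl HQ).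
  pose proof (return_gf_at_one T l HT Hl). lra.
Qed.

(* The parametrisation s = 2z/(1+z^2) of (0,1) by z in (0,1). *)
Definition z_of (s : R) : R := (1 - sqrt (1 - s ^ 2)) / s.

Lemma z_of_spec (s : R) : 0 < s < 1 -> 0 < z_of s < 1 /\ s = 2 * z_of s / (1 + z_of s ^ 2).
Proof.
  intro Hs. unfold z_of. set (r := sqrt (1 - s ^ 2)).
  assert (Hr2 : r * r = 1 - s ^ 2) by (apply sqrt_sqrt; nra).
  assert (Hr0 : 0 <= r) by apply sqrt_pos.
  assert (Hr1 : r < 1) by nra.
  assert (Hr3 : 1 - s < r) by nra.
  split; [split|].
  - apply Rdiv_lt_0_compat; lra.
  - apply (Rmult_lt_reg_r s); [lra|]. unfold Rdiv. rewrite Rmult_assoc, Rinv_l; lra.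
  - assert (0 < s ^ 2 + (1 - r) ^ 2) by nra.
    field_simplify_eq; repeat split; nra.
Qed.

Lemma exit_gf_closed_form (T : nat) (tgt : Z -> bool) (d : bool) (s z u : R) :
  (2 <= T)%nat -> 0 < z < 1 -> s = 2 * z / (1 + z ^ 2) ->
  infinite_sum (fun n => exit_prob T tgt (step d) n * s ^ n) u ->
  u = z * ind (tgt 0%Z) + z ^ T * (1 - z ^ 2) * (ind (tgt (step d * Z.of_nat T)%Z) - ind (tgt 0%Z) * z ^ T)
                         / (z * (1 - (z ^ T) ^ 2)).
Proof.
  intros HT Hz Hsz Hu.
  assert (Hs : 0 < s) by (rewrite Hsz; apply Rdiv_lt_0_compat; nra).
  pose proof (harmonic_seq_closed_form s z (ind (tgt 0%Z)) u T (proj1 Hz) Hsz) as Hcf.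
  rewrite (ray_boundary_value T tgt d s u HT Hs Hu) in Hcf.
  assert (HX : 0 < z ^ T < 1) by (split; [apply pow_lt | apply pow_lt_1_compat]; lra || lia).
  set (X := z ^ T) in *.
  assert (0 < z * (1 - X ^ 2)) by (apply Rmult_lt_0_compat; nra).
  apply (Rmult_eq_reg_r (z * (1 - X ^ 2))); [|lra].
  field_simplify; [|nra]. nra.
Qed.

Lemma exp_mult_INR (lam : R) (n : nat) : exp (- lam * INR n) = exp (- lam) ^ n.
Proof.
  induction n as [|n IH]; [simpl; now rewrite Rmult_0_r, exp_0|].
  rewrite S_INR, Rmult_plus_distr_l, exp_plus, IH, Rmult_1_r. simpl. ring.
Qed.

Lemma Q_terms_hit_prob (T : nat) (lam : R) (n : nat) :
  Q_terms T lam n = hit_prob T (fun _ => true) 0 n * exp (- lam) ^ n.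
Proof. unfold Q_terms. now rewrite P_tau_hit_prob, exp_mult_INR. Qed.

Lemma Q1_terms_hit_prob (T : nat) (lam : R) (n : nat) :
  Q1_terms T lam n = hit_prob T (fun y => Z.eqb y (Z.of_nat T)) 0 n * exp (- lam) ^ n.
Proof. unfold Q1_terms. now rewrite P_tau_eps1_hit_prob, exp_mult_INR. Qed.

Lemma Q_parameter (T : nat) (lam q : R) : (2 <= T)%nat -> q < 1 ->
  infinite_sum (Q_terms T lam) q ->
  (0 < z_of (exp (- lam)) < 1) /\
  exp (- lam) = 2 * z_of (exp (- lam)) / (1 + z_of (exp (- lam)) ^ 2).
Proof.
  intros HT Hq HQ. apply z_of_spec. split; [apply exp_pos|].
  apply (return_gf_lt_one T _ q HT (exp_pos _) Hq).
  exact (isum_ext _ _ _ (Q_terms_hit_prob T lam) HQ).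
Qed.

Lemma Q_closed_form (T : nat) (lam q : R) : (2 <= T)%nat -> q < 1 ->
  infinite_sum (Q_terms T lam) q ->
  let z := z_of (exp (- lam)) in
  q = 2 * z ^ 2 / (1 + z ^ 2) + 2 * z ^ T * (1 - z ^ 2) / ((1 + z ^ 2) * (1 + z ^ T)).
Proof.
  intros HT Hq HQ z.
  destruct (Q_parameter T lam q HT Hq HQ) as [Hz Hsz]. fold z in Hz, Hsz.
  assert (HX : 0 < z ^ T < 1) by (split; [apply pow_lt | apply pow_lt_1_compat]; lra || lia).
  apply (isum_ext _ _ _ (Q_terms_hit_prob T lam)) in HQ.
  destruct (first_step_gf T _ _ q (exp_pos _) HQ) as (up & um & Hup & Hum & ->).
  rewrite (exit_gf_closed_form T _ _ _ z up HT Hz Hsz Hup),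
          (exit_gf_closed_form T _ _ _ z um HT Hz Hsz Hum), Hsz.
  cbn [ind]. field. split; nra.
Qed.

Lemma Q1_closed_form (T : nat) (lam q q1 : R) : (2 <= T)%nat -> q < 1 ->
  infinite_sum (Q_terms T lam) q -> infinite_sum (Q1_terms T lam) q1 ->
  let z := z_of (exp (- lam)) in
  q1 = z ^ T * (1 - z ^ 2) / ((1 + z ^ 2) * (1 - (z ^ T) ^ 2)).
Proof.
  intros HT Hq HQ HQ1 z.
  destruct (Q_parameter T lam q HT Hq HQ) as [Hz Hsz]. fold z in Hz, Hsz.
  assert (HX : 0 < z ^ T < 1) by (split; [apply pow_lt | apply pow_lt_1_compat]; lra || lia).
  apply (isum_ext _ _ _ (Q1_terms_hit_prob T lam)) in HQ1.
  destruct (first_step_gf T _ _ q1 (exp_pos _) HQ1) as (up & um & Hup & Hum & ->).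
  rewrite (exit_gf_closed_form T _ _ _ z up HT Hz Hsz Hup),
          (exit_gf_closed_form T _ _ _ z um HT Hz Hsz Hum), Hsz.
  unfold ind. rewrite (proj2 (Z.eqb_neq 0 _)) by lia.
  rewrite (proj2 (Z.eqb_eq (step true * _) _)) by (unfold step; lia).
  rewrite (proj2 (Z.eqb_neq (step false * _) _)) by (unfold step; lia).
  field. split; nra.
Qed.

Lemma bernoulli (h : R) (m : nat) : -1 <= h -> 1 + INR m * h <= (1 + h) ^ m.
Proof.
  intro Hh. induction m as [|m IH]; [simpl; lra|].
  rewrite S_INR. simpl. pose proof (pos_INR m). nra.
Qed.

(* m Y^m -> 0 for 0 < Y < 1: with r = sqrt Y and 1 + h = 1/r, Bernoulli's
   inequality gives m h r^m <= 1, hence m Y^m <= r^m / h. *)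
Lemma is_lim_seq_INR_geom (Y : R) : 0 < Y < 1 -> is_lim_seq (fun m => INR m * Y ^ m) 0.
Proof.
  intro HY. set (r := sqrt Y).
  assert (Hr2 : r * r = Y) by (apply sqrt_sqrt; lra).
  assert (Hr0 : 0 < r) by (apply sqrt_lt_R0; lra).
  assert (Hr1 : r < 1) by nra.
  set (h := / r - 1).
  assert (Hh : 0 < h) by (unfold h; rewrite <- Rinv_1; assert (/ 1 < / r) by (apply Rinv_lt_contravar; lra); lra).
  apply (is_lim_seq_le_le (fun _ => 0) _ (fun m => / h * r ^ m)).
  - intro m. assert (Hrm : 0 < r ^ m) by now apply pow_lt.
    assert (HYm : Y ^ m = r ^ m * r ^ m) by (rewrite <- Rpow_mult_distr, Hr2; reflexivity).
    assert (Hbound : INR m * h * r ^ m <= 1).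
    { assert (E : (1 + h) ^ m * r ^ m = 1).
      { rewrite <- Rpow_mult_distr. replace ((1 + h) * r) with 1 by (unfold h; field; lra). apply pow1. }
      pose proof (bernoulli h m ltac:(lra)). nra. }
    pose proof (pos_INR m). rewrite HYm. split; [nra|].
    apply (Rmult_le_reg_l h); [exact Hh|].
    replace (h * (/ h * r ^ m)) with (r ^ m) by (field; lra). nra.
  - apply is_lim_seq_const.
  - replace (Finite 0) with (Finite (/ h * 0)) by (f_equal; ring).
    apply is_lim_seq_mult'; [apply is_lim_seq_const | apply is_lim_seq_geom; rewrite Rabs_pos_eq; lra].
Qed.

Section RatioLimit.

Variables (Y : R) (Zs : nat -> R).
Hypothesis HY : 0 < Y < 1.
Hypothesis HZs : forall m, (1 <= m)%nat -> 0 < Zs m <= Y /\ Y - Zs m <= 2 * Y ^ m.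

Lemma is_lim_seq_Zs : is_lim_seq Zs Y.
Proof.
  apply (is_lim_seq_le_le_loc (fun m => Y - 2 * Y ^ m) _ (fun _ => Y)).
  - exists 1%nat. intros m Hm. specialize (HZs m Hm). lra.
  - replace (Finite Y) with (Finite (Y - 2 * 0)) by (f_equal; ring).
    apply is_lim_seq_minus'; [apply is_lim_seq_const|].
    apply is_lim_seq_mult'; [apply is_lim_seq_const|].
    apply is_lim_seq_geom. rewrite Rabs_pos_eq; lra.
  - apply is_lim_seq_const.
Qed.

(* (Z_m / Y)^m -> 1, although the exponent grows: by Bernoulli's inequality
   1 - (2/Y) m Y^m <= (Z_m / Y)^m <= 1. *)
Lemma is_lim_seq_Zs_ratio_pow : is_lim_seq (fun m => (Zs m / Y) ^ m) 1.
Proof.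
  apply (is_lim_seq_le_le_loc (fun m => 1 - 2 / Y * (INR m * Y ^ m)) _ (fun _ => 1)).
  - exists 1%nat. intros m Hm. destruct (HZs m Hm) as [HZ HYZ].
    assert (Hq : 0 <= Zs m / Y <= 1).
    { split; [apply Rle_mult_inv_pos; lra|].
      apply (Rmult_le_reg_r Y); [lra|]. unfold Rdiv. rewrite Rmult_assoc, Rinv_l; lra. }
    split.
    + pose proof (bernoulli (Zs m / Y - 1) m ltac:(lra)) as Hb.
      replace (1 + (Zs m / Y - 1)) with (Zs m / Y) in Hb by ring.
      assert (INR m * (Y - Zs m) <= INR m * (2 * Y ^ m))
        by (apply Rmult_le_compat_l; [apply pos_INR | lra]).
      replace (INR m * (Zs m / Y - 1)) with (- (INR m * (Y - Zs m)) / Y) in Hb by (field; lra).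
      replace (2 / Y * (INR m * Y ^ m)) with (INR m * (2 * Y ^ m) / Y) by (field; lra).
      assert (INR m * (Y - Zs m) / Y <= INR m * (2 * Y ^ m) / Y)
        by (apply Rmult_le_compat_r; [left; apply Rinv_0_lt_compat|]; lra).
      unfold Rdiv in *. lra.
    + rewrite <- (pow1 m). now apply pow_incr.
  - replace (Finite 1) with (Finite (1 - 2 / Y * 0)) by (f_equal; ring).
    apply is_lim_seq_minus'; [apply is_lim_seq_const|].
    apply is_lim_seq_mult'; [apply is_lim_seq_const | now apply is_lim_seq_INR_geom].
  - apply is_lim_seq_const.
Qed.

Lemma is_lim_seq_Zs_pow_sq : is_lim_seq (fun m => (Zs m ^ m) ^ 2) 0.
Proof.
  apply (is_lim_seq_le_le_loc (fun _ => 0) _ (fun m => (Y ^ m) ^ 2)).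
  - exists 1%nat. intros m Hm. destruct (HZs m Hm) as [HZ _].
    assert (0 <= Zs m ^ m <= Y ^ m) by (split; [apply pow_le | apply pow_incr]; lra).
    split; [apply pow2_ge_0 | nra].
  - apply is_lim_seq_const.
  - replace (Finite 0) with (Finite (0 * (0 * 1))) by (f_equal; ring).
    assert (Hg : is_lim_seq (fun m => Y ^ m) 0) by (apply is_lim_seq_geom; rewrite Rabs_pos_eq; lra).
    apply (is_lim_seq_ext (fun m => Y ^ m * (Y ^ m * 1))); [intro m; simpl; ring|].
    apply is_lim_seq_mult'; [exact Hg|]. apply is_lim_seq_mult'; [exact Hg | apply is_lim_seq_const].
Qed.

(* The quantity that Q^1_T / ((1 - e^-delta) e^(-c_delta T)) reduces to, for T = 2m. *)
Lemma is_lim_seq_ratio :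
  is_lim_seq (fun m => (Zs m / Y) ^ m * ((1 - Zs m) * (1 + Y))
                       / ((1 + Zs m) * (1 - Y) * (1 - (Zs m ^ m) ^ 2))) 1.
Proof.
  pose proof is_lim_seq_Zs as HZ.
  replace (Finite 1) with (Finite (1 * ((1 - Y) * (1 + Y)) / ((1 + Y) * (1 - Y) * (1 - 0))))
    by (f_equal; field; lra).
  apply is_lim_seq_div'; [apply is_lim_seq_mult' | apply is_lim_seq_mult' | ].
  - exact is_lim_seq_Zs_ratio_pow.
  - apply is_lim_seq_mult'; [|apply is_lim_seq_const].
    apply is_lim_seq_minus'; [apply is_lim_seq_const | exact HZ].
  - apply is_lim_seq_mult'; [|apply is_lim_seq_const].
    apply is_lim_seq_plus'; [apply is_lim_seq_const | exact HZ].
  - apply is_lim_seq_minus'; [apply is_lim_seq_const | exact is_lim_seq_Zs_pow_sq].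
  - assert (0 < (1 + Y) * (1 - Y) * (1 - 0)) by (rewrite Rminus_0_r, Rmult_1_r; nra). lra.
Qed.

End RatioLimit.

Lemma exp_neg_lt_1 (delta : R) : 0 < delta -> exp (- delta) < 1.
Proof. intro Hd. rewrite <- exp_0. apply exp_increasing. lra. Qed.

Lemma exp_phi_inf (delta : R) : 0 < delta ->
  exp (- 2 * phi_inf delta) = exp (- delta) * (2 - exp (- delta)).
Proof.
  intro Hd. pose proof (exp_neg_lt_1 delta Hd) as Hq.
  pose proof (exp_pos (- delta)).
  set (a := sqrt (2 - exp (- delta))).
  assert (Ha : 0 < a) by (apply sqrt_lt_R0; lra).
  assert (Ha2 : a * a = 2 - exp (- delta)) by (apply sqrt_sqrt; lra).
  unfold phi_inf. fold a.
  replace (- 2 * (delta / 2 - ln a)) with (- delta + (ln a + ln a)) by field.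
  now rewrite !exp_plus, exp_ln, Ha2.
Qed.

Lemma sqrt_factor (delta : R) : 0 < delta ->
  sqrt (1 - exp (- 2 * phi_inf delta)) = 1 - exp (- delta).
Proof.
  intro Hd. pose proof (exp_neg_lt_1 delta Hd) as Hq.
  rewrite exp_phi_inf by exact Hd.
  replace (1 - exp (- delta) * (2 - exp (- delta))) with ((1 - exp (- delta)) ^ 2) by ring.
  apply sqrt_pow2. lra.
Qed.

Lemma exp_c_delta_sq (delta : R) : 0 < delta ->
  exp (- c_delta delta) ^ 2 = exp (- delta) / (2 - exp (- delta)).
Proof.
  intro Hd. pose proof (exp_neg_lt_1 delta Hd) as Hq.
  rewrite <- exp_mult_INR. unfold c_delta. rewrite sqrt_factor by exact Hd.
  replace (1 + (1 - exp (- delta))) with (2 - exp (- delta)) by ring.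
  replace (- (phi_inf delta + ln (2 - exp (- delta))) * INR 2)
    with (- 2 * phi_inf delta + (- ln (2 - exp (- delta)) + - ln (2 - exp (- delta))))
    by (simpl; ring).
  rewrite !exp_plus, exp_phi_inf, (exp_Ropp (ln _)) by exact Hd.
  rewrite exp_ln by lra.
  field. lra.
Qed.

(* The equation Q_T(phi(delta,T)) = e^-delta, with e^-delta = 2Y/(1+Y) and Q_T
   written in Z = z^2 and X = z^T, pins Z within 2X below Y. *)
Lemma parameter_gap (Y Z X : R) : 0 < Y < 1 -> 0 < Z < 1 -> 0 < X < 1 ->
  2 * Y / (1 + Y) = 2 * Z / (1 + Z) + 2 * X * (1 - Z) / ((1 + Z) * (1 + X)) ->
  Z <= Y /\ Y - Z <= 2 * X.
Proof.
  intros HY HZ HX Heq.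
  assert (Hgap : Y - Z = X * (1 - Z) * (1 + Y) / (1 + X)).
  { apply (Rmult_eq_reg_r (2 / ((1 + Y) * (1 + Z)))); [|apply Rgt_not_eq, Rdiv_lt_0_compat; nra].
    transitivity (2 * Y / (1 + Y) - 2 * Z / (1 + Z)); [field; lra|].
    rewrite Heq. field. lra. }
  assert (Hfrac : 0 <= (1 - Z) * (1 + Y) / (1 + X) <= 2).
  { split; [apply Rle_mult_inv_pos; nra|].
    apply (Rmult_le_reg_r (1 + X)); [lra|]. unfold Rdiv. rewrite Rmult_assoc, Rinv_l; nra. }
  replace (X * (1 - Z) * (1 + Y) / (1 + X)) with (X * ((1 - Z) * (1 + Y) / (1 + X))) in Hgap
    by (field; lra).
  split; nra.
Qed.

Lemma c_delta_parameter (delta : R) : 0 < delta ->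
  let Y := exp (- c_delta delta) ^ 2 in
  (0 < Y < 1) /\ exp (- delta) = 2 * Y / (1 + Y).
Proof.
  intros Hd Y.
  pose proof (exp_pos (- delta)). pose proof (exp_neg_lt_1 delta Hd).
  assert (HYq : Y = exp (- delta) / (2 - exp (- delta))) by exact (exp_c_delta_sq delta Hd).
  split; [split|].
  - rewrite HYq. apply Rdiv_lt_0_compat; lra.
  - rewrite HYq. apply (Rmult_lt_reg_r (2 - exp (- delta))); [lra|].
    unfold Rdiv. rewrite Rmult_assoc, Rinv_l; lra.
  - rewrite HYq. field. lra.
Qed.

Definition Zpar (phi : nat -> R) (m : nat) : R := z_of (exp (- phi (2 * m)%nat)) ^ 2.

Section Solutions.

Variables (delta : R) (phi : nat -> R).
Hypothesis hdelta : 0 < delta.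
Hypothesis hphi : forall T : nat, (2 <= T)%nat -> Nat.Even T ->
  infinite_sum (Q_terms T (phi T)) (exp (- delta)).

Let Y := exp (- c_delta delta) ^ 2.

Lemma Q_even (m : nat) : (1 <= m)%nat -> infinite_sum (Q_terms (2 * m) (phi (2 * m))) (exp (- delta)).
Proof. intro Hm. apply hphi; [lia | now exists m]. Qed.

Lemma Zpar_gap (m : nat) : (1 <= m)%nat -> 0 < Zpar phi m <= Y /\ Y - Zpar phi m <= 2 * Y ^ m.
Proof.
  intro Hm. destruct (c_delta_parameter delta hdelta) as [HY HqY]. fold Y in HY, HqY.
  assert (HT : (2 <= 2 * m)%nat) by lia.
  pose proof (exp_neg_lt_1 delta hdelta) as Hq.
  destruct (Q_parameter _ _ _ HT Hq (Q_even m Hm)) as [Hz _].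
  pose proof (Q_closed_form _ _ _ HT Hq (Q_even m Hm)) as Hform. cbv zeta in Hform.
  rewrite pow_mult, HqY in Hform. fold (Zpar phi m) in Hform.
  assert (HZ : 0 < Zpar phi m < 1) by (unfold Zpar; split; nra).
  assert (HX : 0 < Zpar phi m ^ m < 1) by (split; [apply pow_lt | apply pow_lt_1_compat]; lra || lia).
  destruct (parameter_gap _ _ _ HY HZ HX Hform) as [HZY Hgap].
  assert (Zpar phi m ^ m <= Y ^ m) by (apply pow_incr; lra).
  split; lra.
Qed.

Lemma normalised_Q1 (m : nat) (q1 : R) : (1 <= m)%nat ->
  infinite_sum (Q1_terms (2 * m) (phi (2 * m))) q1 ->
  q1 / (sqrt (1 - exp (- 2 * phi_inf delta)) * exp (- c_delta delta * INR (2 * m)))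
  = (Zpar phi m / Y) ^ m * ((1 - Zpar phi m) * (1 + Y))
    / ((1 + Zpar phi m) * (1 - Y) * (1 - (Zpar phi m ^ m) ^ 2)).
Proof.
  intros Hm Hq1. destruct (c_delta_parameter delta hdelta) as [HY HqY]. fold Y in HY, HqY.
  assert (HT : (2 <= 2 * m)%nat) by lia.
  pose proof (exp_neg_lt_1 delta hdelta) as Hq.
  rewrite (Q1_closed_form _ _ _ _ HT Hq (Q_even m Hm) Hq1). cbv zeta.
  rewrite sqrt_factor, exp_mult_INR, !pow_mult by exact hdelta.
  fold Y (Zpar phi m).
  destruct (Zpar_gap m Hm) as [HZ _].
  assert (HX : 0 < Zpar phi m ^ m < 1)
    by (split; [apply pow_lt | apply pow_lt_1_compat]; lra || lia).
  assert (HYm : 0 < Y ^ m) by (apply pow_lt; lra).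
  replace ((Zpar phi m / Y) ^ m) with (Zpar phi m ^ m / Y ^ m)
    by (unfold Rdiv; now rewrite Rpow_mult_distr, pow_inv).
  rewrite HqY. field. repeat split; nra.
Qed.

End Solutions.

Theorem lemma7 (delta : R) (hdelta : 0 < delta) (phi : nat -> R)
  (hphi : forall T : nat, (2 <= T)%nat -> Nat.Even T ->
            infinite_sum (Q_terms T (phi T)) (exp (- delta))) :
  forall eps : R, 0 < eps ->
  exists N : nat, forall T : nat, (N <= T)%nat -> (2 <= T)%nat -> Nat.Even T ->
    forall q1 : R, infinite_sum (Q1_terms T (phi T)) q1 ->
      Rabs (q1 / (sqrt (1 - exp (- 2 * phi_inf delta)) * exp (- c_delta delta * INR T)) - 1)
        < eps.
Proof.
  intros eps Heps.
  destruct (c_delta_parameter delta hdelta) as [HY _].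
  pose proof (is_lim_seq_ratio _ (Zpar phi) HY (Zpar_gap delta phi hdelta hphi)) as Hlim.
  apply is_lim_seq_spec in Hlim. destruct (Hlim (mkposreal eps Heps)) as [N HN].
  exists (2 * N)%nat. intros T HNT HT [m ->] q1 Hq1.
  rewrite (normalised_Q1 delta phi hdelta hphi m q1 ltac:(lia) Hq1).
  apply HN. lia.
Qed.
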